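(* Let $\lambda=(\lambda_1,\dots,\lambda_k)$ be a partition with Ferrers diagram $\Phi_\lambda$. Then the number of edges of the Hasse diagram of $\mathcal{Y}_\lambda$ is $$\ell(\mathcal{Y}_\lambda)=\sum_{(i,j)\in\Phi_\lambda}\big|\mathcal{Y}_{\lambda^{\swarrow}_{ij}}\big|\cdot\big|\mathcal{Y}_{\lambda^{\nearrow}_{ij}}\big|.$$
   Context: A partition is a finite weakly decreasing sequence $\lambda=(\lambda_1\ge\dots\ge\lambda_k>0)$ of positive integers (the empty partition is allowed). Its Ferrers diagram $\Phi_\lambda$ is the set of cells $(i,j)$ with $1\le i\le k$, $1\le j\le\lambda_i$ (row $i$, column $j$). Partitions are ordered by $(a_1,\dots,a_h)\le(b_1,\dots,b_m)$ iff $h\le m$ and $a_i\le b_i$ for all $i\le h$ (equivalently, containment of diagrams). $\mathcal{Y}_\lambda$ is the set of all partitions $\alpha\le\lambda$ (including the empty partition) with this order, so $|\mathcal{Y}_\emptyset|=1$. For a cell $(i,j)\in\Phi_\lambda$: $\lambda^{\nearrow}_{ij}$ is the partition whose parts are $\lambda_1-j,\lambda_2-j,\dots,\lambda_{i-1}-j$ with zero parts removed (the cells of $\Phi_\lambda$ in rows $1,\dots,i-1$ and columns $>j$); $\lambda^{\swarrow}_{ij}$ is the partition whose parts are $\min(\lambda_{i+1},j-1),\dots,\min(\lambda_k,j-1)$ with zero parts removed (the cells of $\Phi_\lambda$ in rows $>i$ and columns $1,\dots,j-1$). $\ell(P)$ is the number of edges (covering pairs) of the Hasse diagram of a finite poset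 $P$. *)

From mathcomp Require Import all_boot.
Set Implicit Arguments. Unset Strict Implicit. Unset Printing Implicit Defensive.

Definition is_partition (s : seq nat) : bool :=
  sorted geq s && all (fun x => 0 < x) s.

Definition part_le (a b : seq nat) : bool :=
  (size a <= size b) && all (fun i => nth 0 a i <= nth 0 b i) (iota 0 (size a)).

Definition part_lt (a b : seq nat) : bool := part_le a b && (a != b).

Fixpoint bseqs (n m : nat) : seq (seq nat) :=
  if n is n'.+1 then [seq x :: s | x <- iota 0 m.+1, s <- bseqs n' m]
  else [:: [::]].

(* Y_lambda: the list (without repetitions) of all partitions alpha <= lambda.
   Any such alpha has length <= size lambda and parts <= lambda_1, so the
   candidate list below contains all of them. *)
Definition Ylist (lam : seq nat) : seq (seq nat) :=
  [seq a <- flatten [seq bseqs n (head 0 lam) | n <- iota 0 (size lam).+1]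
     | is_partition a && part_le a lam].

Definition covers (lam a b : seq nat) : bool :=
  [&& a \in Ylist lam, b \in Ylist lam, part_lt a b &
      ~~ has (fun c => part_lt a c && part_lt c b) (Ylist lam)].

Definition hasse_edges (lam : seq nat) : nat :=
  \sum_(a <- Ylist lam) \sum_(b <- Ylist lam) covers lam a b.

(* For the 0-based cell (i, j) (i.e. the 1-based cell (i+1, j+1)):
   lam_ne: parts lambda_r - (j+1) for rows r < i (0-based), zeros removed;
   lam_sw: parts min(lambda_r, j) for rows r > i (0-based), zeros removed. *)
Definition lam_ne (lam : seq nat) (i j : nat) : seq nat :=
  [seq x <- [seq nth 0 lam r - j.+1 | r <- iota 0 i] | 0 < x].

Definition lam_sw (lam : seq nat) (i j : nat) : seq nat :=
  [seq x <- [seq minn (nth 0 lam r) j | r <- iota i.+1 (size lam - i.+1)] | 0 < x].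

From mathcomp Require Import all_boot zify.
Set Implicit Arguments. Unset Strict Implicit. Unset Printing Implicit Defensive.

(* Counting the edges of the Hasse diagram of Y_lam by their added box.

   Padding partitions with zeros to length k = size lam identifies Y_lam with
   young_box lam, the weakly decreasing sequences x of length k lying
   pointwise below lam; the order of Y becomes the pointwise order.  In
   young_box lam, y covers x exactly when y is x with one box added to some
   row i, so the edges of the Hasse diagram are the pairs (x, i) such that
   the box (i, x_i) is an addable corner of x.  Grouping these pairs by the
   box (i, j) of lam that is added, a diagram x with addable box (i, j) is an
   independent choice of
   - rows 0..i-1, all longer than j: shifted by j+1 these form Y of lam_ne;
   - row i of length j;
   - rows i+1.., all of length at most j: these form Y of lam_sw. *)

Definition decreasing (x : seq nat) : bool := sorted geq x.

Lemma geq_trans : transitive geq.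
Proof. by move=> a b c h1 h2; apply: leq_trans h2 h1. Qed.

Lemma decreasingP x : reflect (forall r, nth 0 x r.+1 <= nth 0 x r) (decreasing x).
Proof.
apply: (iffP (sortedP 0)) => H r; last by move=> _; apply: H.
by case: (ltnP r.+1 (size x)) => h; [exact: H | rewrite nth_default].
Qed.

Lemma decreasing_nth x i j : decreasing x -> i <= j -> nth 0 x j <= nth 0 x i.
Proof.
move=> /decreasingP H /subnK <-; elim: (j - i) => [|d IH] //=.
by rewrite addSn; apply: leq_trans (H _) IH.
Qed.

Definition positives (x : seq nat) : seq nat := [seq y <- x | 0 < y].
Definition pad (k : nat) (a : seq nat) : seq nat := a ++ nseq (k - size a) 0.

Lemma nth_pad k a r : nth 0 (pad k a) r = nth 0 a r.
Proof.
rewrite nth_cat; case: ltnP => // h.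
by rewrite nth_nseq if_same nth_default.
Qed.

Lemma positives_pad k a : all (fun y => 0 < y) a -> positives (pad k a) = a.
Proof. by move=> ha; rewrite /positives filter_cat filter_nseq cats0; apply/all_filterP. Qed.

Lemma pad_positives x : decreasing x -> pad (size x) (positives x) = x.
Proof.
elim: x => [|a x IH] // hax; have hx : decreasing x := path_sorted hax.
case: (posnP a) => [a0|apos]; last first.
  by rewrite /positives /= apos /pad /= subSS -[in RHS](IH hx).
have zx : x = nseq (size x) 0.
  apply: (@eq_from_nth _ 0); first by rewrite size_nseq.
  move=> r _; rewrite nth_nseq if_same.
  by have := decreasing_nth hax (leq0n r.+1); rewrite /= a0 leqn0 => /eqP.
by rewrite /pad /positives /= a0 /= zx filter_nseq size_nseq.
Qed.

Lemma nth_positives x r : decreasing x -> nth 0 (positives x) r = nth 0 x r.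
Proof. by move=> hx; rewrite -{2}(pad_positives hx) nth_pad. Qed.

Lemma positives_partition x : decreasing x -> is_partition (positives x).
Proof. by move=> hx; apply/andP; split; [exact: sorted_filter geq_trans _ _ hx | exact: filter_all]. Qed.

Lemma all2_leqP x y :
  reflect (size x = size y /\ forall r, nth 0 x r <= nth 0 y r) (all2 leq x y).
Proof.
apply: (iffP idP).
  elim: x y => [|a x IH] [|b y] //= /andP[h1 h2].
  by case: (IH _ h2) => -> H; split=> // -[|r] /=.
move=> [hs H]; elim: x y hs H => [|a x IH] [|b y] //= [hs] H.
by rewrite (H 0) /= (IH y hs (fun r => H r.+1)).
Qed.

Lemma part_leP a b :
  reflect (size a <= size b /\ forall r, nth 0 a r <= nth 0 b r) (part_le a b).
Proof.
apply: (iffP andP) => -[h1 h2]; split=> //; last by apply/allP => r _; apply: h2.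
move=> r; case: (ltnP r (size a)) => hr; last by rewrite nth_default.
by move/allP: h2; apply; rewrite mem_iota.
Qed.

Lemma part_le_pointwise a b : all (fun y => 0 < y) a ->
  part_le a b <-> (forall r, nth 0 a r <= nth 0 b r).
Proof.
move=> ha; split; first by case/part_leP.
move=> H; apply/part_leP; split => //; rewrite leqNgt; apply/negP => h.
have := H (size b); rewrite [nth 0 b _]nth_default // leqn0 => /eqP a0.
by move/allP/(_ _ (mem_nth 0 h)): ha; rewrite a0.
Qed.

Fixpoint boxes (u : seq nat) : seq (seq nat) :=
  if u is c :: u' then [seq x :: s | x <- iota 0 c.+1, s <- boxes u'] else [:: [::]].

Lemma boxes_cons c u : boxes (c :: u) = [seq x :: s | x <- iota 0 c.+1, s <- boxes u].
Proof. by []. Qed.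

Lemma mem_boxes u s : (s \in boxes u) = all2 leq s u.
Proof.
elim: u s => [|c u IH] [|a s] //; rewrite boxes_cons.
  by apply/negbTE/allpairsP => -[[x t] [_ _ /=]].
apply/allpairsP/andP => [[[x t] [h1 h2 [-> ->]]]|[h1 h2]].
  by split; [move: h1; rewrite mem_iota | move: h2; rewrite IH].
by exists (a, s); split => //; [rewrite mem_iota | rewrite IH].
Qed.

Lemma uniq_boxes u : uniq (boxes u).
Proof.
elim: u => [|c u IH] //; rewrite boxes_cons.
apply: allpairs_uniq => //; first exact: iota_uniq.
by move=> [a s] [b t] _ _ /= [-> ->].
Qed.

Lemma boxes_cat u v : boxes (u ++ v) = [seq p ++ q | p <- boxes u, q <- boxes v].
Proof.
elim: u => [|c u IH]; first by rewrite /= cats0 map_id.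
rewrite cat_cons !boxes_cons IH.
elim: (iota 0 c.+1) => [|a l IHl] //=; rewrite IHl allpairs_cat; congr (_ ++ _).
by elim: (boxes u) => [|p ps IHp] //=; rewrite map_cat IHp -map_comp.
Qed.

Lemma bseqs_boxes n m : bseqs n m = boxes (nseq n m).
Proof. by elim: n => //= n ->. Qed.

Lemma uniq_flatten_sized (g : nat -> seq (seq nat)) m l :
  (forall n, uniq (g n)) -> (forall n y, y \in g n -> size y = n) ->
  uniq (flatten (map g (iota m l))).
Proof.
move=> hu hs; elim: l m => [|l IH] m //=; rewrite cat_uniq hu IH andbT /=.
apply/hasPn => y /flatten_mapP [n]; rewrite mem_iota => /andP[h1 _] hy.
by apply/negP => /hs; rewrite (hs _ _ hy) => E; move: h1; rewrite E ltnn.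
Qed.

Lemma mem_Ylist mu a : is_partition mu ->
  (a \in Ylist mu) = is_partition a && part_le a mu.
Proof.
move=> /andP[hmu _]; rewrite /Ylist mem_filter.
case P: (is_partition a && part_le a mu) => //; rewrite andTb.
move/andP: P => [_ /part_leP [hsz hle]].
apply/flatten_mapP; exists (size a); first by rewrite mem_iota.
rewrite bseqs_boxes mem_boxes; apply/all2_leqP; rewrite size_nseq; split=> // r.
rewrite nth_nseq; case: ltnP => hr; last by rewrite nth_default.
by apply: leq_trans (hle r) _; rewrite -nth0; exact: decreasing_nth hmu (leq0n r).
Qed.

Lemma uniq_Ylist mu : uniq (Ylist mu).
Proof.
apply: filter_uniq; apply: uniq_flatten_sized => [n|n y]; rewrite bseqs_boxes.
  exact: uniq_boxes.
by rewrite mem_boxes => /all2_leqP [-> _]; rewrite size_nseq.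
Qed.

Definition young_box (v : seq nat) : seq (seq nat) := [seq x <- boxes v | decreasing x].

Lemma young_boxP v x :
  reflect [/\ size x = size v, forall r, nth 0 x r <= nth 0 v r
            & forall r, nth 0 x r.+1 <= nth 0 x r]
          (x \in young_box v).
Proof.
rewrite mem_filter mem_boxes; apply: (iffP andP).
  by move=> [/decreasingP h1 /all2_leqP[h2 h3]].
by move=> [h1 h2 h3]; split; [apply/decreasingP | apply/all2_leqP].
Qed.

Lemma uniq_young_box v : uniq (young_box v).
Proof. exact/filter_uniq/uniq_boxes. Qed.

Lemma Ylist_pad_perm v : decreasing v ->
  perm_eq (map (pad (size v)) (Ylist (positives v))) (young_box v).
Proof.
move=> hv; set mu := positives v.
have hmu : is_partition mu := positives_partition hv.
have nth_mu r : nth 0 mu r = nth 0 v r := nth_positives r hv.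
have size_mu : size mu <= size v by rewrite size_filter count_size.
apply: uniq_perm; [|exact: uniq_young_box|].
  rewrite map_inj_in_uniq ?uniq_Ylist // => a b.
  rewrite !mem_Ylist // => /andP[/andP[_ ha] _] /andP[/andP[_ hb] _] E.
  by rewrite -(positives_pad (size v) ha) -(positives_pad (size v) hb) E.
move=> y; apply/mapP/young_boxP.
  move=> [a]; rewrite mem_Ylist // => /andP[/andP[/decreasingP ha _] /part_leP[hsz hle]] ->.
  split=> [|r|r]; rewrite ?nth_pad //; last by rewrite -nth_mu.
  by rewrite size_cat size_nseq subnKC // (leq_trans hsz size_mu).
move=> [hs hle /decreasingP hy]; exists (positives y); last by rewrite -hs pad_positives.
rewrite mem_Ylist // positives_partition //=.
by apply/part_le_pointwise; [exact: filter_all | move=> r; rewrite nth_positives // nth_mu].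
Qed.

Lemma size_Ylist_positives v : decreasing v ->
  size (Ylist (positives v)) = count decreasing (boxes v).
Proof. by move=> hv; rewrite -size_filter -(perm_size (Ylist_pad_perm hv)) size_map. Qed.

Definition pw_le (x y : seq nat) : Prop := forall r, nth 0 x r <= nth 0 y r.
Definition pw_lt (x y : seq nat) : Prop := pw_le x y /\ x <> y.

Lemma incr_nth_inj x : injective (incr_nth x).
Proof.
move=> a b E; have := congr1 (nth 0 ^~ a) E; rewrite /= !nth_incr_nth eqxx.
by case: (eqVneq b a) => [-> //|_]; rewrite add0n; lia.
Qed.

Lemma pw_lt_incr_nth x i : pw_lt x (incr_nth x i).
Proof.
split=> [r|E]; first by rewrite nth_incr_nth leq_addl.
by have := congr1 (nth 0 ^~ i) E; rewrite /= nth_incr_nth eqxx; lia.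
Qed.

Lemma incr_nth_no_between x z i : i < size x -> size z = size x ->
  pw_lt x z -> pw_lt z (incr_nth x i) -> False.
Proof.
move=> hi hz [h1 n1] [h2 n2].
have same r : r != i -> nth 0 z r = nth 0 x r.
  move=> ri; apply/eqP; rewrite eqn_leq h1 andbT.
  by have := h2 r; rewrite nth_incr_nth eq_sym (negbTE ri).
have := h1 i; have := h2 i; rewrite nth_incr_nth eqxx add1n => zi1 zi2.
have [zi|zi] : nth 0 z i = nth 0 x i \/ nth 0 z i = (nth 0 x i).+1 by lia.
  apply: n1; apply: (@eq_from_nth _ 0 _ _ (esym hz)) => r _.
  by case: (eqVneq r i) => [->|ri]; [rewrite zi | rewrite same].
apply: n2; apply: (@eq_from_nth _ 0); first by rewrite size_incr_nth hi hz.
move=> r _; rewrite nth_incr_nth; case: (eqVneq i r) => [<-|ir]; first by rewrite zi.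
by rewrite same // eq_sym.
Qed.

Lemma pw_lt_witness x y : size x = size y -> pw_lt x y ->
  exists r, nth 0 x r < nth 0 y r.
Proof.
move=> hs [hle hne].
case: (boolP (has (fun r => nth 0 x r < nth 0 y r) (iota 0 (size x)))).
  by case/hasP => r _ hr; exists r.
move/hasPn => H; case: hne; apply: (@eq_from_nth _ 0 _ _ hs) => r hr.
by apply/eqP; rewrite eqn_leq hle leqNgt H // mem_iota.
Qed.

(* Below any y > x in young_box v, one may add to x a box in the first row
   where x and y differ and stay in young_box v. *)
Lemma first_increment v x y : x \in young_box v -> y \in young_box v -> pw_lt x y ->
  exists i, [/\ i < size v, incr_nth x i \in young_box v & pw_le (incr_nth x i) y].
Proof.
move=> /young_boxP[sx bx dx] /young_boxP[sy by_ dy] hxy.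
have [i hi hmin] := ex_minnP (pw_lt_witness (etrans sx (esym sy)) hxy).
have iv : i < size v.
  by rewrite ltnNge; apply/negP => h; move: hi; rewrite [nth 0 y i]nth_default ?sy.
exists i; split=> //; last first.
  by move=> r; rewrite nth_incr_nth; case: eqP => [<-|_]; [rewrite add1n | exact: hxy.1].
apply/young_boxP; split=> [|r|r]; first by rewrite size_incr_nth sx iv.
  rewrite nth_incr_nth; case: eqP => [<-|_]; last exact: bx.
  exact: leq_trans hi (by_ i).
rewrite !nth_incr_nth; case: (eqVneq i r.+1) => [ir|_].
  have yx : nth 0 y r <= nth 0 x r.
    by rewrite leqNgt; apply/negP => /hmin; rewrite ir ltnn.
  by subst i; move: (dy r) hi; rewrite (gtn_eqF (ltnSn r)) add1n add0n; lia.
by rewrite add0n (leq_trans (dx r)) ?leq_addl.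
Qed.

Lemma young_box_cover v x y : x \in young_box v -> y \in young_box v ->
  (pw_lt x y /\ ~ (exists z, [/\ z \in young_box v, pw_lt x z & pw_lt z y])) <->
  (exists2 i, i < size v & y = incr_nth x i).
Proof.
move=> hx hy; have [sx _ _] := young_boxP _ _ hx; split.
  move=> [hxy hnone]; have [i [iv hz hzy]] := first_increment hx hy hxy.
  exists i => //; case: (eqVneq y (incr_nth x i)) => [//|N].
  case: hnone; exists (incr_nth x i); split=> //; first exact: pw_lt_incr_nth.
  by split=> // E; rewrite E eqxx in N.
move=> [i iv ->]; split; first exact: pw_lt_incr_nth.
move=> [z [/young_boxP[sz _ _] h1 h2]].
by apply: incr_nth_no_between h1 h2; rewrite ?sx.
Qed.

Lemma young_box_pad lam : is_partition lam ->
  perm_eq (map (pad (size lam)) (Ylist lam)) (young_box lam).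
Proof.
by move=> /andP[hd hp]; have := Ylist_pad_perm hd; rewrite /positives (all_filterP hp).
Qed.

Lemma pw_lt_pad k a b : all (fun y => 0 < y) a -> all (fun y => 0 < y) b ->
  reflect (pw_lt (pad k a) (pad k b)) (part_lt a b).
Proof.
move=> ha hb; apply: (iffP andP) => [[h1 h2]|[h1 h2]]; split.
- by move=> r; rewrite !nth_pad; exact: (part_le_pointwise b ha).1 h1 r.
- by move=> E; move: h2; rewrite -(positives_pad k ha) -(positives_pad k hb) E eqxx.
- by apply/(part_le_pointwise b ha) => r; have := h1 r; rewrite !nth_pad.
- by apply/eqP => E; apply: h2; rewrite E.
Qed.

Lemma covers_pad lam a b : is_partition lam -> a \in Ylist lam -> b \in Ylist lam ->
  covers lam a b =
  has (fun i => incr_nth (pad (size lam) a) i == pad (size lam) b) (iota 0 (size lam)).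
Proof.
move=> hlam ha hb; set P := pad (size lam).
have hperm := young_box_pad hlam.
have inY c : c \in Ylist lam -> P c \in young_box lam.
  by move=> hc; rewrite -(perm_mem hperm) map_f.
have ltP c d : c \in Ylist lam -> d \in Ylist lam -> reflect (pw_lt (P c) (P d)) (part_lt c d).
  by rewrite !mem_Ylist // => /andP[/andP[_ hc] _] /andP[/andP[_ hd] _]; apply: pw_lt_pad.
have [cov_to cov_from] := young_box_cover (inY _ ha) (inY _ hb).
rewrite /covers ha hb !andTb; apply/idP/hasP.
  move=> /andP[/(ltP _ _ ha hb) hlt hnone].
  have [|i iv E] := cov_to; last by exists i; rewrite ?mem_iota ?E.
  split=> // -[z [hz h1 h2]].
  have /mapP[c hc Ez] : z \in map P (Ylist lam) by rewrite (perm_mem hperm).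
  subst z; apply: (negP hnone); apply/hasP; exists c => //.
  by apply/andP; split; [apply/(ltP _ _ ha hc) | apply/(ltP _ _ hc hb)].
move=> [i]; rewrite mem_iota => /andP[_ iv] /eqP E.
have [|hlt hnone] := cov_from; first by exists i.
apply/andP; split; first exact/(ltP _ _ ha hb).
apply/hasPn => c hc; apply/negP => /andP[h1 h2]; apply: hnone.
by exists (P c); split; [exact: inY | apply/(ltP _ _ ha hc) | apply/(ltP _ _ hc hb)].
Qed.

Lemma sum_bool_count (T : Type) (P : pred T) s : \sum_(x <- s) (P x : nat) = count P s.
Proof. by rewrite -sumn_count sumnE big_map. Qed.

Lemma count_mem_sym (T : eqType) (s t : seq T) : uniq s -> uniq t ->
  count (mem t) s = count (mem s) t.
Proof.
move=> us ut; rewrite -!size_filter; apply/perm_size/uniq_perm; try exact: filter_uniq.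
by move=> y; rewrite !mem_filter andbC.
Qed.

Lemma hasse_edges_addable lam : is_partition lam ->
  hasse_edges lam =
  \sum_(x <- young_box lam) \sum_(i < size lam) (incr_nth x i \in young_box lam).
Proof.
move=> hlam; set S := young_box lam; have hperm := young_box_pad hlam.
have out_degree x : \sum_(y <- S) has (fun i => incr_nth x i == y) (iota 0 (size lam))
                  = \sum_(i < size lam) (incr_nth x i \in S).
  rewrite sum_bool_count.
  transitivity (count (mem [seq incr_nth x i | i <- iota 0 (size lam)]) S).
    by apply: eq_count => y; apply/hasP/mapP => [[i hi /eqP E]|[i hi E]];
      exists i; rewrite ?E.
  rewrite count_mem_sym ?uniq_young_box ?(map_inj_uniq (@incr_nth_inj x)) ?iota_uniq //.
  rewrite -(big_mkord xpredT (fun i => (incr_nth x i \in S) : nat)) /index_iota subn0.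
  by rewrite sum_bool_count count_map.
rewrite /hasse_edges -[RHS](perm_big _ hperm) big_map.
apply: eq_big_seq => a ha; rewrite -out_degree -(perm_big _ hperm) big_map.
by apply: eq_big_seq => b hb; rewrite covers_pad.
Qed.

Lemma incr_nth_young_box lam x i : x \in young_box lam -> i < size lam ->
  (incr_nth x i \in young_box lam) =
  (nth 0 x i < nth 0 lam i) && ((i == 0) || (nth 0 x i < nth 0 x i.-1)).
Proof.
move=> /young_boxP[sx bx dx] il; apply/young_boxP/andP.
  move=> [_ bz dz]; split; first by have := bz i; rewrite nth_incr_nth eqxx add1n.
  case: i il {bz} dz => [|i] // _ dz; have := dz i.
  by rewrite !nth_incr_nth eqxx (gtn_eqF (ltnSn i)) add1n.
move=> [h1 h2]; split=> [|r|r]; first by rewrite size_incr_nth sx il.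
  by rewrite nth_incr_nth; case: eqP => [<-|_]; [rewrite add1n | exact: bx].
rewrite !nth_incr_nth; case: (eqVneq i r.+1) => [ir|_].
  by subst i; move: h2; rewrite (gtn_eqF (ltnSn r)).
case: (eqVneq i r) => [ir|_]; last exact: dx.
by subst i; rewrite add0n add1n (leq_trans (dx r)).
Qed.

Definition addable_at (x : seq nat) (i j : nat) : bool :=
  (nth 0 x i == j) && ((i == 0) || (j < nth 0 x i.-1)).

Lemma sum_pick n (a : nat) (P : pred nat) :
  \sum_(j < n) ((a == j :> nat) && P j) = (a < n) && P a.
Proof.
elim: n => [|n IH]; first by rewrite big_ord0.
rewrite big_ord_recr /= IH [in RHS]ltnS [in RHS]leq_eqVlt.
by case: (eqVneq a n) => [->|_]; rewrite ?ltnn ?addn0.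
Qed.

Lemma sum_addable_at lam x i : x \in young_box lam -> i < size lam ->
  \sum_(j < nth 0 lam i) addable_at x i j = (incr_nth x i \in young_box lam).
Proof.
move=> hx hi; rewrite incr_nth_young_box //.
exact: (sum_pick _ _ (fun j => (i == 0) || (j < nth 0 x i.-1))).
Qed.

Lemma count_andl (T : Type) (b : bool) (P : pred T) s :
  count (fun x => b && P x) s = b * count P s.
Proof. by case: b; rewrite ?mul1n ?mul0n //; elim: s. Qed.

Lemma count_allpairs_and (A B C : eqType) (f : A -> B -> C) (P : pred C)
    (a : pred A) (b : pred B) s t :
  {in s & t, forall x y, P (f x y) = a x && b y} ->
  count P [seq f x y | x <- s, y <- t] = count a s * count b t.
Proof.
elim: s => [|x s IH] hP //=; rewrite count_cat mulnDl IH; last first.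
  by move=> u v us vt; apply: hP; rewrite ?inE ?us ?orbT.
rewrite count_map -count_andl; congr (_ + _); apply: eq_in_count => y yt /=.
by apply: hP; rewrite ?inE ?eqxx.
Qed.

Lemma all_last a p j : decreasing (a :: p) -> all (fun z => j < z) (a :: p) = (j < last a p).
Proof.
rewrite /decreasing /=; elim: p a => [|b p IH] a /=; first by rewrite andbT.
move=> /andP[hab hp]; rewrite -IH //=.
by apply/idP/idP => [/andP[_ ->]|/andP[h ->]] //; rewrite andbT (leq_trans h hab).
Qed.

Lemma addable_at_split p y s j :
  addable_at (p ++ y :: s) (size p) j && decreasing (p ++ y :: s) =
  (decreasing p && all (fun z => j < z) p) &&
  ((y == j) && (decreasing s && all (fun z => z <= j) s)).
Proof.
rewrite /addable_at nth_cat ltnn subnn /=.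
case: (eqVneq y j) => [->|_]; last by rewrite !andbF.
case: p => [|a p].
  by rewrite /decreasing /= (path_sortedE geq_trans) andbC.
have -> : nth 0 ((a :: p) ++ j :: s) (size (a :: p)).-1 = last a p.
  by rewrite nth_cat ltnSn (nth_last 0 (a :: p)).
have -> : decreasing ((a :: p) ++ j :: s) =
          [&& decreasing (a :: p), j <= last a p & all (fun z => z <= j) s && decreasing s].
  by rewrite /decreasing /= cat_path /= (path_sortedE geq_trans j s).
case hp: (decreasing (a :: p)); last by rewrite /= andbF.
rewrite (all_last j hp) /=.
by case h: (j < last a p) => //=; rewrite (ltnW h) /= andbC.
Qed.

Lemma count_addable_at lam i j : i < size lam -> j < nth 0 lam i ->
  count (fun x => addable_at x i j) (young_box lam) =
  count (fun p => decreasing p && all (fun z => j < z) p) (boxes (take i lam)) *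
  count (fun s => decreasing s && all (fun z => z <= j) s) (boxes (drop i.+1 lam)).
Proof.
move=> hi hj; set u := take i lam; set w := drop i.+1 lam.
have E : lam = u ++ nth 0 lam i :: w by rewrite /u /w -drop_nth // cat_take_drop.
have su : size u = i by rewrite size_take hi.
pose above p := decreasing p && all (fun z => j < z) p.
pose below s := decreasing s && all (fun z => z <= j) s.
pose row_i q := if q is y :: s then (y == j) && below s else false.
rewrite count_filter {1}E boxes_cat (count_allpairs_and (a := above) (b := row_i)); last first.
  move=> p q; rewrite mem_boxes => /all2_leqP[sp _].
  rewrite boxes_cons => /allpairsP[[y s] [_ _ ->]] /=.
  by rewrite -su -sp; exact: addable_at_split.
congr (_ * _); rewrite boxes_cons (count_allpairs_and (a := pred1 j) (b := below)) //.
by rewrite count_uniq_mem ?iota_uniq // mem_iota ltnS (ltnW hj) mul1n.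
Qed.

Lemma all2_leq_shift c q u : all (fun z => c <= z) u ->
  all2 leq (map (addn c) q) u = all2 leq q (map (subn^~ c) u).
Proof.
elim: q u => [|a q IH] [|b u] //= /andP[hb hu].
by rewrite IH // leq_subRL.
Qed.

Lemma decreasing_shift c q : decreasing (map (addn c) q) = decreasing q.
Proof. by rewrite /decreasing sorted_map; apply: eq_sorted => x y /=; rewrite leq_add2l. Qed.

Lemma count_decreasing_above u c : all (fun z => c <= z) u ->
  count (fun p => decreasing p && all (fun z => c <= z) p) (boxes u) =
  count decreasing (boxes (map (subn^~ c) u)).
Proof.
move=> hu.
have shift : perm_eq (map (map (addn c)) (boxes (map (subn^~ c) u)))
                     [seq p <- boxes u | all (fun z => c <= z) p].
  apply: uniq_perm; [|exact/filter_uniq/uniq_boxes|].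
    by rewrite map_inj_uniq ?uniq_boxes //; apply/inj_map/addnI.
  move=> p; rewrite mem_filter mem_boxes; apply/mapP/andP.
    move=> [q]; rewrite mem_boxes -all2_leq_shift // => hq ->; split=> //.
    by apply/allP => z /mapP[a _ ->]; apply: leq_addr.
  move=> [hp hpu]; have pK : map (addn c) (map (subn^~ c) p) = p.
    by rewrite -map_comp map_id_in // => z /(allP hp) hz /=; rewrite subnKC.
  by exists (map (subn^~ c) p); rewrite ?mem_boxes -?all2_leq_shift ?pK.
transitivity (count decreasing [seq p <- boxes u | all (fun z => c <= z) p]).
  by rewrite count_filter.
by rewrite -(permP shift) count_map; apply: eq_count => q /=; rewrite decreasing_shift.
Qed.

Lemma all2_leq_min s w j :
  all2 leq s (map (minn^~ j) w) = all2 leq s w && all (fun z => z <= j) s.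
Proof.
elim: s w => [|a s IH] [|c w] //=.
by rewrite leq_min IH; case: (a <= c); case: (a <= j); case: (all2 leq s w).
Qed.

Lemma count_decreasing_below w j :
  count (fun s => decreasing s && all (fun z => z <= j) s) (boxes w) =
  count decreasing (boxes (map (minn^~ j) w)).
Proof.
have cut : perm_eq (boxes (map (minn^~ j) w)) [seq s <- boxes w | all (fun z => z <= j) s].
  apply: uniq_perm; [exact: uniq_boxes | exact/filter_uniq/uniq_boxes|].
  by move=> s; rewrite mem_filter !mem_boxes all2_leq_min andbC.
by rewrite (permP cut) count_filter.
Qed.

Lemma lam_ne_take lam i j : i <= size lam ->
  lam_ne lam i j = positives (map (subn^~ j.+1) (take i lam)).
Proof. by move=> hi; rewrite /lam_ne -(map_nth_iota0 0 hi) -map_comp. Qed.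

Lemma lam_sw_drop lam i j :
  lam_sw lam i j = positives (map (minn^~ j) (drop i.+1 lam)).
Proof.
rewrite -[drop i.+1 lam](@take_oversize _ (size lam - i.+1)) ?size_drop //.
by rewrite -(map_nth_iota 0) // -map_comp.
Qed.

Lemma count_addable_at_Ylist lam i j : is_partition lam -> i < size lam -> j < nth 0 lam i ->
  count (fun x => addable_at x i j) (young_box lam) =
  size (Ylist (lam_sw lam i j)) * size (Ylist (lam_ne lam i j)).
Proof.
move=> /andP[hd _] hi hj.
have above_j : all (fun z => j < z) (take i lam).
  apply/allP => z /(nthP 0)[r]; rewrite size_take hi => hr <-.
  by rewrite nth_take // (leq_trans hj) // decreasing_nth // ltnW.
have dec_ne : decreasing (map (subn^~ j.+1) (take i lam)).
  by apply: (homo_sorted (e := geq)); [move=> x y /= h; lia | exact: take_sorted].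
have dec_sw : decreasing (map (minn^~ j) (drop i.+1 lam)).
  by apply: (homo_sorted (e := geq)); [move=> x y /= h; lia | exact: drop_sorted].
rewrite count_addable_at // mulnC lam_ne_take ?(ltnW hi) // lam_sw_drop.
by rewrite !size_Ylist_positives // count_decreasing_below count_decreasing_above.
Qed.

Theorem mainTheorem18 (lam : seq nat) :
  is_partition lam ->
  hasse_edges lam =
  \sum_(i < size lam) \sum_(j < nth 0 lam i)
     size (Ylist (lam_sw lam i j)) * size (Ylist (lam_ne lam i j)).
Proof.
move=> hlam; rewrite hasse_edges_addable // exchange_big; apply: eq_bigr => i _.
transitivity (\sum_(x <- young_box lam) \sum_(j < nth 0 lam i) addable_at x i j).
  by apply: eq_big_seq => x hx; rewrite sum_addable_at.
rewrite exchange_big; apply: eq_bigr => j _.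
by rewrite sum_bool_count count_addable_at_Ylist.
Qed.
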